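(* Let $n\geqslant 1$ and let $T$ be a basic tree with $2n$ vertices. Let $D$ be the directed graph obtained from $T$ by replacing every edge $ab$ of $T$ by the two directed edges $\overrightarrow{ab}$ and $\overrightarrow{ba}$. Then $\Delta(D)$ is homotopy equivalent to the sphere $\mathbb{S}^{n-1}$.
   Context: A basic tree is either a tree with exactly two vertices, or a tree with $2n$ vertices, $n$ of which are leaves and $n$ non-leaves, such that every non-leaf is adjacent to exactly one leaf. For a finite directed graph $D$, $\Delta(D)$ has the directed edges of $D$ as vertices and the edge sets of directed forests in $D$ (vertex-disjoint unions of rooted directed trees; equivalently, edge sets in which every vertex has in-degree at most $1$ and there is no directed cycle) as faces. *)

From HB Require Import structures.
From mathcomp Require Import all_boot all_order all_algebra.
From mathcomp Require Import all_classical all_reals all_analysis.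
Unset Printing Implicit Defensive.
Import Order.TTheory GRing.Theory Num.Theory.

Import numFieldNormedType.Exports.
Local Open Scope classical_set_scope.
Local Open Scope ring_scope.

Definition simple_graph (V : finType) (e : rel V) : Prop :=
  symmetric e /\ irreflexive e.
Arguments simple_graph {V} e.

Definition graph_connected (V : finType) (e : rel V) : Prop :=
  forall x y : V, connect e x y.
Arguments graph_connected {V} e.

Definition graph_acyclic (V : finType) (e : rel V) : Prop :=
  forall p : seq V, uniq p -> (3 <= size p)%N -> ~~ cycle e p.
Arguments graph_acyclic {V} e.

Definition is_tree (V : finType) (e : rel V) : Prop :=
  simple_graph e /\ graph_connected e /\ graph_acyclic e.
Arguments is_tree {V} e.

Definition degree (V : finType) (e : rel V) (x : V) : nat := #|[set y | e x y]%SET|.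
Arguments degree {V} e x.

Definition is_leaf (V : finType) (e : rel V) (x : V) : bool := degree e x == 1%N.
Arguments is_leaf {V} e x.

Definition basic_tree (V : finType) (e : rel V) : Prop :=
  is_tree e /\
  ( #|V| = 2%N \/
    exists n : nat,
      [/\ #|V| = (2 * n)%N,
          #|[set x | is_leaf e x]%SET| = n,
          #|[set x | ~~ is_leaf e x]%SET| = n &
          forall x : V, ~~ is_leaf e x ->
            #|[set y | e x y & is_leaf e y]%SET| = 1%N]).
Arguments basic_tree {V} e.

Definition arc (W : finType) (D : rel W) := {p : W * W | D p.1 p.2}.
Arguments arc {W} D.

Definition double_orient (V : finType) (e : rel V) : rel V :=
  fun a b => e a b || e b a.
Arguments double_orient {V} e _ _.

Definition directed_forest (W : finType) (D : rel W) (F : {set arc D}) : Prop :=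
  (forall v : W, #|[set a in F | (val a).2 == v]%SET| <= 1)%N /\
  (forall p : seq W, p != [::] ->
     ~~ cycle (fun u v => [exists a in F, val a == (u, v)]) p).
Arguments directed_forest {W} D F.

(* Geometric realization of a finite abstract simplicial complex on the finite
   vertex set A with faces [face]: the subspace of R^A (with its product =
   Euclidean topology) of points x with x >= 0,
   sum x = 1 and support of x a face. *)
Definition realization (R : realType) (A : finType) (face : {set A} -> Prop)
  : set {ptws A -> R} :=
  [set x | (forall a, 0 <= x a) /\ \sum_(a : A) x a = 1 /\
           face [set a | x a != 0]%SET].
Arguments realization R {A} face _.

Definition Delta_realization (R : realType) (W : finType) (D : rel W) : set {ptws arc D -> R} :=
  realization R (@directed_forest W D).
Arguments Delta_realization R {W} D _.

(* The unit sphere S^(m) in R^(m+1); here given as the sphere in R^k,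
   i.e. S^(k-1). *)
Definition sphere_in (R : realType) (k : nat) : set {ptws 'I_k -> R} :=
  [set x | \sum_(i < k) x i ^+ 2 = 1].
Arguments sphere_in R k _.

Definition homotopic_on (R : realType) (X Y : topologicalType)
  (A : set X) (B : set Y) (f g : X -> Y) : Prop :=
  exists H : R * X -> Y,
    [/\ {within `[(0:R), 1] `*` A, continuous H},
        (forall x, A x -> H (0, x) = f x /\ H (1, x) = g x) &
        (forall t x, `[(0:R), 1]%classic t -> A x -> B (H (t, x)))].
Arguments homotopic_on R {X Y} A B f g.

Definition homotopy_equivalent (R : realType) (X Y : topologicalType)
  (A : set X) (B : set Y) : Prop :=
  exists (f : X -> Y) (g : Y -> X),
    [/\ {within A, continuous f}, {within B, continuous g},
        (forall x, A x -> B (f x)) /\ (forall y, B y -> A (g y)),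
        homotopic_on R A A (g \o f) id &
        homotopic_on R B B (f \o g) id].
Arguments homotopy_equivalent R {X Y} A B.

From Pilot Require Import Defs.
From HB Require Import structures.
From mathcomp Require Import all_boot all_order all_algebra.
From mathcomp Require Import all_classical all_reals all_analysis.
From mathcomp Require Import lra.
Import numFieldNormedType.Exports.
Import Order.TTheory GRing.Theory Num.Theory.

Set Implicit Arguments.
Unset Strict Implicit.
Local Open Scope classical_set_scope.
Local Open Scope ring_scope.

(* Pair every vertex of the basic tree with a neighbour p v: a leaf with its
   neighbour, a non-leaf with its unique leaf neighbour. A set of arcs v -> p v
   is a forest iff it never contains both v -> p v and p v -> v, so these arcs
   span the boundary of the n-dimensional cross-polytope, which radial
   projection identifies with S^(n-1). Redirect every other arc u -> w to
   w -> p w: then p w is a leaf hanging at w, so a forest together with its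
   redirection is still a forest. Hence the straight-line homotopy from a point
   of Delta(D) to the cross-polytope point given by its redirected weights stays
   inside Delta(D). *)

Section PointwiseConvergence.
Variable R : realType.

Lemma cvg_ptws (A : Type) (T : Type) (F : set_system T) {FF : Filter F}
    (f : T -> {ptws A -> R}) (l : {ptws A -> R}) :
  (forall a, (fun x => f x a) @ F --> l a) -> f @ F --> l.
Proof.
move=> fl; apply/cvg_sup => a; apply/cvg_image.
  by rewrite eqEsubset; split => // r _; exists (fun _ => r).
move=> U /fl /= Ua; exists (proj a @^-1` U) => //.
rewrite image_preimage //.
by rewrite eqEsubset; split => // r _; exists (fun _ => r).
Qed.

Lemma cvg_sumr (T : Type) (F : set_system T) {FF : Filter F} (I : Type)
    (r : seq I) (P : pred I) (f : I -> T -> R) (l : I -> R) :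
  (forall i, P i -> f i @ F --> l i) ->
  (fun x => \sum_(i <- r | P i) f i x) @ F --> \sum_(i <- r | P i) l i.
Proof. by apply: cvg_big => //; exact: add_continuous. Qed.

End PointwiseConvergence.

Lemma continuous_within_of_cvg (T U : topologicalType) (B : set T) (f : T -> U) :
  (forall x, B x -> f @ nbhs x --> f x) -> {within B, continuous f}.
Proof.
by move=> fB; apply/subspace_continuousP => x Bx; apply: cvg_within_filter; exact: fB.
Qed.

Section MatchedDigraph.
Variables (W : finType) (D : rel W) (p : W -> W).
Hypotheses (D_sym : symmetric D) (D_partner : forall v, D v (p v))
  (partnerK : involutive p).
Hypothesis partner_pendant :
  forall u w z, D u w -> u != p w -> D z (p w) -> z = w.

Local Notation arc := (Defs.arc D).

Definition match_arc (v : W) : arc := exist _ (v, p v) (D_partner v).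

Definition is_match (a : arc) : bool := (val a).1 == p (val a).2.

Definition to_match (a : arc) : arc := if is_match a then a else match_arc (val a).2.

Lemma match_arc_inj : injective match_arc.
Proof. by move=> u v /(congr1 (fun a : arc => (val a).1)). Qed.

Lemma is_match_arc v : is_match (match_arc v).
Proof. by rewrite /is_match /= partnerK. Qed.

Lemma is_matchE a : is_match a -> a = match_arc (val a).1.
Proof.
move=> /eqP eu; apply: val_inj; case: a eu => [[u w] Duw] /= ->.
by rewrite partnerK.
Qed.

Lemma is_match_to_match a : is_match (to_match a).
Proof. by rewrite /to_match; case: ifP => // _; exact: is_match_arc. Qed.

Lemma to_match_out a : ~~ is_match a -> to_match a = match_arc (val a).2.
Proof. by rewrite /to_match => /negbTE ->. Qed.

Lemma non_match_pendant (c : arc) z :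
  ~~ is_match c -> D z (p (val c).2) -> z = (val c).2.
Proof. exact: partner_pendant (valP c). Qed.

Lemma directed_forest_subset (A B : {set arc}) :
  A \subset B -> directed_forest D B -> directed_forest D A.
Proof.
move=> AB [indegB acycB]; split.
  move=> v; apply: leq_trans (indegB v); apply: subset_leq_card.
  by apply/fintype.subsetP => a; rewrite !inE => /andP[/(fintype.subsetP AB) -> ->].
move=> q q0; apply: contra (acycB q q0); apply: sub_cycle => u v.
by case/existsP => a /andP[aA uv]; apply/existsP; exists a; rewrite (fintype.subsetP AB).
Qed.

Lemma directed_forest_no_match_pair (F : {set arc}) v :
  directed_forest D F -> ~~ ((match_arc v \in F) && (match_arc (p v) \in F)).
Proof.
case=> _ acycF; apply/negP => /andP[vF pvF].
move/negP: (acycF [:: v; p v] isT); apply; rewrite /= andbT.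
apply/andP; split; apply/existsP; [exists (match_arc v) | exists (match_arc (p v))];
  by rewrite ?vF ?pvF /= ?partnerK.
Qed.

(* A 2-cycle v -> p v -> v is the only cycle matching arcs can form. *)
Lemma directed_forest_matches (A : {set arc}) :
  (forall a, a \in A -> is_match a) ->
  (forall v, ~~ ((match_arc v \in A) && (match_arc (p v) \in A))) ->
  directed_forest D A.
Proof.
move=> Amatch Apair; split.
  move=> v; apply: leq_trans (_ : #|[set match_arc (p v)]%SET| <= 1)%N;
    last by rewrite cards1.
  apply: subset_leq_card; apply/fintype.subsetP => a; rewrite !inE.
  case/andP => aA /eqP av; rewrite (is_matchE (Amatch a aA)).
  by have := Amatch a aA; rewrite /is_match av => /eqP ->.
case=> [//|x q] _; apply/negP => cq.
have /existsP[a /andP[aA /eqP va]] := next_cycle cq (mem_head x q).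
set y := next (x :: q) x in va.
have yq : y \in x :: q by rewrite mem_next mem_head.
have /existsP[b /andP[bA /eqP vb]] := next_cycle cq yq.
have := Amatch a aA; rewrite /is_match va /= => /eqP xy.
have ea : a = match_arc x by rewrite (is_matchE (Amatch a aA)) va.
have eb : b = match_arc y by rewrite (is_matchE (Amatch b bA)) vb.
by have := Apair y; rewrite -eb bA -xy -ea aA.
Qed.

Lemma in_setU_to_match (F : {set arc}) a : (a \in F) || (a \in to_match @: F) ->
  a \in F \/ exists2 c, c \in F & ~~ is_match c /\ a = match_arc (val c).2.
Proof.
case/orP => [aF|/imsetP[c cF ->]]; first by left.
by case: (boolP (is_match c)) => m; [left; rewrite /to_match m | right; exists c;
  rewrite ?to_match_out].
Qed.

Lemma to_match_indegree (F : {set arc}) :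
  directed_forest D F ->
  forall v, (#|[set a in F :|: to_match @: F | (val a).2 == v]%SET| <= 1)%N.
Proof.
case=> indegF _ v.
have [/existsP[c /andP[cF /andP[nm /eqP pv]]]|none] :=
  boolP [exists c in F, ~~ is_match c && (p (val c).2 == v)].
  (* v is a leaf hanging at the head of c, so its only possible in-arc is c.2 -> v *)
  apply: leq_trans (_ : #|[set match_arc (val c).2]%SET| <= 1)%N;
    last by rewrite cards1.
  apply: subset_leq_card; apply/fintype.subsetP => a; rewrite !inE.
  case/andP => /in_setU_to_match[aF|[c' _ [_ ea]]] /eqP av.
    have Da : D (val a).1 (p (val c).2) by rewrite pv -av; exact: (valP a).
    apply/eqP/val_inj; case: a av Da {aF} => [[u w] Duw] /= av Da.
    by rewrite av -pv -(non_match_pendant nm Da).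
  by rewrite ea /= in av *; rewrite -(partnerK (val c').2) av -pv partnerK.
apply: leq_trans (indegF v); apply: subset_leq_card.
apply/fintype.subsetP => a; rewrite !inE.
case/andP => /in_setU_to_match[aF|[c cF [nm ea]]] /eqP av.
  by rewrite aF av eqxx.
move/negP: none; case; apply/existsP; exists c.
by rewrite cF nm -av ea eqxx.
Qed.

Lemma to_match_acyclic (F : {set arc}) :
  directed_forest D F -> forall q : seq W, q != [::] ->
  ~~ cycle (fun u v => [exists a in F :|: to_match @: F, val a == (u, v)]) q.
Proof.
case=> indegF acycF q q0; apply: contra (acycF q q0) => cq.
apply: (sub_in_cycle (P := mem q)) (cq); last by apply/allP.
move=> x y _ yq /existsP[a /andP[+ /eqP va]].
rewrite finset.in_setU => /in_setU_to_match[aF|[c cF [nm ea]]].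
  by apply/existsP; exists a; rewrite aF va eqxx.
exfalso; have [_ ey] : (x, y) = ((val c).2, p (val c).2) by rewrite -va ea.
(* the cycle leaves the leaf y = p c.2, which is only adjacent to c.2 *)
have /existsP[b /andP[bU /eqP vb]] := next_cycle cq yq.
rewrite finset.in_setU in bU.
set z := next q y in vb.
have ez : z = (val c).2.
  apply: non_match_pendant nm _; rewrite -ey D_sym.
  by have := valP b; rewrite vb.
case/in_setU_to_match: bU => [bF|[c' _ [nm' eb]]].
  have : (1 < #|[set a in F | (val a).2 == (val c).2]%SET|)%N.
    apply: leq_trans (_ : #|[set c; b]%SET| <= _)%N.
      rewrite cards2; case: eqP => // cb; move: nm.
      by rewrite cb /is_match vb /= ez -ey eqxx.
    apply: subset_leq_card; apply/fintype.subsetP => d; rewrite !inE.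
    by case/orP => /eqP ->; rewrite ?cF ?bF ?vb /= ?ez eqxx.
  by rewrite ltnNge indegF.
have ey' : y = (val c').2 by have := congr1 (fun a : arc => (val a).1) eb; rewrite vb.
have ec : (val c').1 = (val c).2.
  by apply: non_match_pendant nm _; rewrite -ey ey'; exact: (valP c').
by move: nm'; rewrite /is_match -ey' ey partnerK ec eqxx.
Qed.

Lemma directed_forest_setU_to_match (F : {set arc}) :
  directed_forest D F -> directed_forest D (F :|: to_match @: F).
Proof. by move=> Fforest; split; [exact: to_match_indegree | exact: to_match_acyclic]. Qed.

Variable R : realType.
Variables (n : nat) (s : 'I_n -> W).
Hypotheses (s_inj : injective s) (s_cover : forall v, exists i, v = s i \/ v = p (s i))
  (s_partner : forall i j, s i != p (s j)).

Local Notation X := {ptws arc -> R}.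
Local Notation Y := {ptws 'I_n -> R}.
Local Notation Delta := (realization R (directed_forest D)).

Definition supp (x : X) : {set arc} := [set a | x a != 0]%SET.

Definition push_match (x : X) : X :=
  fun a => \sum_b (if to_match b == a then x b else 0).

Definition match_coord (x : X) (i : 'I_n) : R :=
  push_match x (match_arc (s i)) - push_match x (match_arc (p (s i))).

Definition l2norm (c : 'I_n -> R) : R := Num.sqrt (\sum_i c i ^+ 2).

Definition to_sphere (x : X) : Y := fun i => match_coord x i / l2norm (match_coord x).

Definition pos_part (r : R) : R := (`|r| + r) / 2.
Definition neg_part (r : R) : R := (`|r| - r) / 2.

Definition cross_weight (y : Y) (a : arc) : R :=
  \sum_i ((if a == match_arc (s i) then pos_part (y i) else 0)
          + (if a == match_arc (p (s i)) then neg_part (y i) else 0)).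

Definition to_cross (y : Y) : X := fun a => cross_weight y a / \sum_i `|y i|.

Definition cross_supp (y : Y) : {set arc} :=
  [set a | [exists i, ((a == match_arc (s i)) && (0 < y i))
                      || ((a == match_arc (p (s i))) && (y i < 0))]]%SET.

Definition retract_homotopy (q : R * X) : X :=
  fun a => q.1 * q.2 a + (1 - q.1) * to_cross (to_sphere q.2) a.

Lemma pos_partE r : pos_part r = if 0 <= r then r else 0.
Proof.
rewrite /pos_part; case: ifPn => [r0|]; first by rewrite ger0_norm //; lra.
by rewrite -ltNge => r0; rewrite ltr0_norm //; lra.
Qed.

Lemma neg_partE r : neg_part r = if r < 0 then - r else 0.
Proof.
rewrite /neg_part; case: ifPn => [r0|]; first by rewrite ltr0_norm //; lra.
by rewrite -leNgt => r0; rewrite ger0_norm //; lra.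
Qed.

Lemma pos_part_ge0 r : 0 <= pos_part r.
Proof. by rewrite pos_partE; case: ifP. Qed.

Lemma neg_part_ge0 r : 0 <= neg_part r.
Proof. by rewrite neg_partE; case: ifP => // /ltW; rewrite oppr_ge0. Qed.

Lemma pos_partDneg_part r : pos_part r + neg_part r = `|r|.
Proof. rewrite /pos_part /neg_part; lra. Qed.

Lemma pos_partBneg_part r : pos_part r - neg_part r = r.
Proof. rewrite /pos_part /neg_part; lra. Qed.

Lemma Delta_ge0 x : Delta x -> forall a, 0 <= x a.
Proof. by case. Qed.

Lemma Delta_forest_setU_to_match x :
  Delta x -> directed_forest D (supp x :|: to_match @: supp x).
Proof. by case=> _ [_ /directed_forest_setU_to_match]. Qed.

Lemma Delta_pos x : Delta x -> exists a, 0 < x a.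
Proof.
move=> Dx; have [/existsP[a xa]|] := boolP [exists a, x a != 0].
  by exists a; rewrite lt_neqAle eq_sym xa Delta_ge0.
rewrite negb_exists => /forallP x0; case: Dx => _ [+ _].
by rewrite big1 => [/eqP|a _]; [rewrite eq_sym oner_eq0 | apply/eqP/negPn].
Qed.

Lemma push_match_ge0 x a : (forall b, 0 <= x b) -> 0 <= push_match x a.
Proof. by move=> x0; apply: sumr_ge0 => b _; case: ifP. Qed.

Lemma push_match_ge x b : (forall b, 0 <= x b) -> x b <= push_match x (to_match b).
Proof.
move=> x0; rewrite /push_match (bigD1 b) //= eqxx lerDl.
by apply: sumr_ge0 => c _; case: ifP.
Qed.

Lemma push_match_supp x a : push_match x a != 0 -> a \in to_match @: supp x.
Proof.
apply: contraR => na; rewrite /push_match big1 // => b _; case: ifP => // /eqP ba.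
by apply/eqP; apply: contraR na => xb; rewrite -ba imset_f // inE.
Qed.

Lemma push_match_pair x v : Delta x ->
  push_match x (match_arc v) = 0 \/ push_match x (match_arc (p v)) = 0.
Proof.
move=> Dx; have := directed_forest_no_match_pair v (Delta_forest_setU_to_match Dx).
have [|v0] := eqVneq (push_match x (match_arc v)) 0; first by left.
have [|pv0] := eqVneq (push_match x (match_arc (p v))) 0; first by right.
by rewrite !finset.in_setU (push_match_supp v0) (push_match_supp pv0) !orbT.
Qed.

Lemma match_coord_neq0 x : Delta x -> exists i, match_coord x i != 0.
Proof.
move=> Dx; have [b xb] := Delta_pos Dx.
have pos : 0 < push_match x (to_match b).
  exact: lt_le_trans xb (push_match_ge _ (Delta_ge0 Dx)).
have [i ei] : exists i, to_match b = match_arc (s i) \/ to_match b = match_arc (p (s i)).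
  have [i [e|e]] := s_cover (val (to_match b)).1; exists i; [left | right];
    by rewrite {1}(is_matchE (is_match_to_match b)) e.
exists i; rewrite /match_coord.
case: ei pos => -> pos; case: (push_match_pair (s i) Dx) => e0.
- by rewrite e0 ltxx in pos.
- by rewrite e0 subr0 gt_eqF.
- by rewrite e0 sub0r oppr_eq0 gt_eqF.
- by rewrite e0 ltxx in pos.
Qed.

Lemma l2norm_gt0 (c : 'I_n -> R) : (exists i, c i != 0) -> 0 < l2norm c.
Proof.
case=> i ci; rewrite /l2norm sqrtr_gt0 (bigD1 i) //=.
have : 0 < c i ^+ 2 by rewrite lt_neqAle eq_sym sqrf_eq0 ci sqr_ge0.
have : 0 <= \sum_(j | j != i) c j ^+ 2 by apply: sumr_ge0 => j _; exact: sqr_ge0.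
lra.
Qed.

Lemma to_sphere_sphere x : Delta x -> sphere_in R n (to_sphere x).
Proof.
move=> Dx; have := l2norm_gt0 (match_coord_neq0 Dx).
rewrite /sphere_in /= /to_sphere /l2norm => nrm0.
under eq_bigr do rewrite expr_div_n.
rewrite -mulr_suml sqr_sqrtr; last by apply: sumr_ge0 => j _; exact: sqr_ge0.
by apply: divff; move: nrm0; rewrite sqrtr_gt0 => /lt0r_neq0.
Qed.

Lemma sphere_l1_gt0 y : sphere_in R n y -> 0 < \sum_i `|y i|.
Proof.
move=> y1; have [/existsP[i yi]|] := boolP [exists i, y i != 0].
  rewrite (bigD1 i) //=.
  have : 0 < `|y i| by rewrite normr_gt0.
  have : 0 <= \sum_(j | j != i) `|y j| by apply: sumr_ge0.
  lra.
rewrite negb_exists => /forallP y0; move: y1; rewrite /sphere_in /= big1 => [/eqP|j _].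
  by rewrite eq_sym oner_eq0.
by move/negPn/eqP: (y0 j) => ->; rewrite expr0n.
Qed.

Lemma to_cross_supp y a : to_cross y a != 0 -> a \in cross_supp y.
Proof.
rewrite /to_cross; apply: contraR => na; apply/eqP.
rewrite /cross_weight big1 ?mul0r // => i _.
move: na; rewrite finset.in_set negb_exists => /forallP/(_ i).
rewrite negb_or => /andP[h1 h2].
have -> : (if a == match_arc (s i) then pos_part (y i) else 0) = 0.
  case: (a == _) h1 => //= y0; rewrite pos_partE; case: ifP => // y0'.
  by apply/eqP; rewrite eq_le y0' andbT leNgt.
by case: ifP h2 => [_ /= /negbTE y0|_ _]; rewrite add0r // neg_partE y0.
Qed.

Lemma directed_forest_cross_supp y : directed_forest D (cross_supp y).
Proof.
apply: directed_forest_matches.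
  by move=> a; rewrite inE => /existsP[i /orP[] /andP[/eqP -> _]]; exact: is_match_arc.
move=> v; apply/negP; rewrite !inE => /andP[/existsP[i +] /existsP[j +]].
rewrite !(inj_eq match_arc_inj) (inj_eq (inv_inj partnerK)).
case/orP => /andP[/eqP vi yi]; case/orP => /andP[/eqP vj yj].
- by move: (s_partner j i); rewrite -vj vi eqxx.
- by move: vj; rewrite vi => /s_inj eij; move: (lt_trans yj yi); rewrite eij ltxx.
- by move: vj; rewrite vi partnerK => /s_inj eij; move: (lt_trans yi yj); rewrite eij ltxx.
- by move: (s_partner j i); rewrite -vj vi eqxx.
Qed.

Lemma to_cross_Delta y : sphere_in R n y -> Delta (to_cross y).
Proof.
move=> y1; have l1 := sphere_l1_gt0 y1; split; [|split].
- move=> a; apply: divr_ge0 (ltW l1); apply: sumr_ge0 => i _.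
  by apply: addr_ge0; case: ifP => _ //; [exact: pos_part_ge0 | exact: neg_part_ge0].
- rewrite /to_cross -mulr_suml /cross_weight exchange_big /=.
  under eq_bigr do rewrite big_split /= -!big_mkcond !big_pred1_eq pos_partDneg_part.
  by rewrite divff // gt_eqF.
- apply: directed_forest_subset (directed_forest_cross_supp y).
  by apply/fintype.subsetP => a; rewrite inE; exact: to_cross_supp.
Qed.

Lemma cross_weight_s y i : cross_weight y (match_arc (s i)) = pos_part (y i).
Proof.
rewrite /cross_weight (bigD1 i) //= eqxx (inj_eq match_arc_inj) (negbTE (s_partner i i)).
rewrite addr0 big1 ?addr0 // => j ji; rewrite !(inj_eq match_arc_inj).
by rewrite (negbTE (s_partner i j)) (inj_eq s_inj) eq_sym (negbTE ji) addr0.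
Qed.

Lemma cross_weight_ps y i : cross_weight y (match_arc (p (s i))) = neg_part (y i).
Proof.
rewrite /cross_weight (bigD1 i) //= eqxx (inj_eq match_arc_inj) eq_sym.
rewrite (negbTE (s_partner i i)) add0r big1 ?addr0 // => j ji.
rewrite !(inj_eq match_arc_inj) eq_sym (negbTE (s_partner j i)).
by rewrite (inj_eq (inv_inj partnerK)) (inj_eq s_inj) eq_sym (negbTE ji) addr0.
Qed.

Lemma to_cross_non_match y b : ~~ is_match b -> to_cross y b = 0.
Proof.
move=> nm; rewrite /to_cross /cross_weight big1 ?mul0r // => i _.
by rewrite !ifN ?addr0 //; apply: contraNneq nm => ->; exact: is_match_arc.
Qed.

Lemma push_match_to_cross y : push_match (to_cross y) = to_cross y.
Proof.
apply/funext => a; rewrite /push_match.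
transitivity (\sum_b (if b == a then to_cross y b else 0)); last first.
  by rewrite -big_mkcond big_pred1_eq.
apply: eq_bigr => b _; have [m|nm] := boolP (is_match b); first by rewrite /to_match m.
by rewrite to_cross_non_match //; case: ifP; case: ifP.
Qed.

Lemma to_sphereK y : sphere_in R n y -> to_sphere (to_cross y) = y.
Proof.
move=> y1; have := sphere_l1_gt0 y1; set S := \sum_i `|y i| => S0.
have coord : match_coord (to_cross y) = fun i => y i / S.
  apply/funext => i; rewrite /match_coord push_match_to_cross /to_cross.
  by rewrite cross_weight_s cross_weight_ps -mulrBl pos_partBneg_part.
have nrm : l2norm (match_coord (to_cross y)) = S^-1.
  rewrite coord /l2norm; under eq_bigr do rewrite expr_div_n.
  rewrite -mulr_suml y1 mul1r -exprVn sqrtr_sqr ger0_norm //.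
  by rewrite invr_ge0 ltW.
by apply/funext => i; rewrite /to_sphere nrm coord invrK divfK ?gt_eqF.
Qed.

Lemma to_cross_to_sphere_supp x : Delta x ->
  supp (to_cross (to_sphere x)) \subset to_match @: supp x.
Proof.
move=> Dx; have nrm0 := l2norm_gt0 (match_coord_neq0 Dx); have x0 := Delta_ge0 Dx.
apply/fintype.subsetP => a; rewrite finset.in_set => /to_cross_supp.
rewrite finset.in_set => /existsP[i /orP[] /andP[/eqP -> yi]]; apply: push_match_supp.
  move: yi; rewrite /to_sphere ltr_pdivlMr // mul0r /match_coord => yi.
  have pm0 := push_match_ge0 (match_arc (p (s i))) x0; rewrite gt_eqF //; lra.
move: yi; rewrite /to_sphere ltr_pdivrMr // mul0r /match_coord => yi.
have pm0 := push_match_ge0 (match_arc (s i)) x0; rewrite gt_eqF //; lra.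
Qed.

Lemma retract_homotopy_Delta t x :
  0 <= t <= 1 -> Delta x -> Delta (retract_homotopy (t, x)).
Proof.
case/andP=> t0 t1 Dx; have Dy := to_cross_Delta (to_sphere_sphere Dx).
split; [|split].
- move=> a; rewrite /retract_homotopy /=.
  by apply: addr_ge0; apply: mulr_ge0; rewrite ?subr_ge0 ?(Delta_ge0 Dx) ?(Delta_ge0 Dy).
- rewrite /retract_homotopy /= big_split /= -!mulr_sumr.
  by case: Dx => _ [-> _]; case: Dy => _ [-> _]; lra.
- apply: directed_forest_subset (Delta_forest_setU_to_match Dx).
  apply/fintype.subsetP => a; rewrite finset.in_set finset.in_setU /retract_homotopy /= => ha.
  have [xa|] := eqVneq (x a) 0; last by rewrite finset.in_set => ->.
  apply/orP; right; apply: (fintype.subsetP (to_cross_to_sphere_supp Dx)).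
  by rewrite finset.in_set; apply: contra ha => /eqP ->; rewrite xa !mulr0 addr0.
Qed.

Section Continuity.
Variables (T : Type) (F : set_system T) (FF : Filter F).

Lemma pos_part_cvg (g : T -> R) l : g @ F --> l -> (fun t => pos_part (g t)) @ F --> pos_part l.
Proof. by move=> gl; apply: cvgM; [apply: cvgD => //; exact: cvg_norm | exact: cvg_cst]. Qed.

Lemma neg_part_cvg (g : T -> R) l : g @ F --> l -> (fun t => neg_part (g t)) @ F --> neg_part l.
Proof. by move=> gl; apply: cvgM; [apply: cvgB => //; exact: cvg_norm | exact: cvg_cst]. Qed.

Lemma to_sphere_cvg (f : T -> X) (x : X) :
  (forall b, (fun t => f t b) @ F --> x b) -> l2norm (match_coord x) != 0 ->
  forall i, (fun t => to_sphere (f t) i) @ F --> to_sphere x i.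
Proof.
move=> fx nrm0 i.
have coord j : (fun t => match_coord (f t) j) @ F --> match_coord x j.
  by apply: cvgB; apply: cvg_sumr => b _; (case: (_ == _); [exact: fx | exact: cvg_cst]).
have sq : (fun t => \sum_j match_coord (f t) j ^+ 2) @ F --> \sum_j match_coord x j ^+ 2.
  by apply: cvg_sumr => j _; under eq_cvg do rewrite expr2; rewrite expr2; exact: cvgM.
apply: cvgM; first exact: coord.
by apply: cvgV => //; apply: cvg_comp sq _; exact: sqrt_continuous.
Qed.

Lemma to_cross_cvg (g : T -> Y) (y : Y) :
  (forall i, (fun t => g t i) @ F --> y i) -> \sum_i `|y i| != 0 ->
  forall a, (fun t => to_cross (g t) a) @ F --> to_cross y a.
Proof.
move=> gy l10 a; apply: cvgM; last first.
  by apply: cvgV => //; apply: cvg_sumr => i _; exact: cvg_norm.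
apply: cvg_sumr => i _; apply: cvgD.
  by case: (_ == _); [exact: pos_part_cvg | exact: cvg_cst].
by case: (_ == _); [exact: neg_part_cvg | exact: cvg_cst].
Qed.

End Continuity.

Lemma retract_homotopy_continuous :
  {within `[(0 : R), 1] `*` Delta, continuous retract_homotopy}.
Proof.
apply: continuous_within_of_cvg => -[t x] [_ Dx].
apply: cvg_ptws => a; rewrite /retract_homotopy /=.
have tcvg : (fun q : R * X => q.1) @ nbhs (t, x) --> t by exact: cvg_fst.
have xcvg : (fun q : R * X => q.2) @ nbhs (t, x) --> x by exact: cvg_snd.
have xcoord b : (fun q : R * X => q.2 b) @ nbhs (t, x) --> x b.
  exact: cvg_comp xcvg (@proj_continuous _ (fun _ => R) b x).
apply: cvgD; apply: cvgM => //; first by apply: cvgB => //; exact: cvg_cst.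
apply: to_cross_cvg; last exact: lt0r_neq0 (sphere_l1_gt0 (to_sphere_sphere Dx)).
by apply: to_sphere_cvg => //; exact: lt0r_neq0 (l2norm_gt0 (match_coord_neq0 Dx)).
Qed.

Theorem Delta_homotopy_equivalent_sphere : homotopy_equivalent R Delta (sphere_in R n).
Proof.
have coord_cvg (A : finType) (z : {ptws A -> R}) a :
    (fun w : {ptws A -> R} => w a) @ nbhs z --> z a.
  exact: (@proj_continuous _ (fun _ => R) a z).
exists to_sphere, to_cross; split.
- apply: continuous_within_of_cvg => x Dx; apply: cvg_ptws.
  apply: to_sphere_cvg; first exact: coord_cvg.
  exact: lt0r_neq0 (l2norm_gt0 (match_coord_neq0 Dx)).
- apply: continuous_within_of_cvg => y y1; apply: cvg_ptws.
  apply: to_cross_cvg; first exact: coord_cvg.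
  exact: lt0r_neq0 (sphere_l1_gt0 y1).
- by split; [exact: to_sphere_sphere | exact: to_cross_Delta].
- exists retract_homotopy; split; first exact: retract_homotopy_continuous.
    by move=> x _; split; apply/funext => a; rewrite /retract_homotopy /=; lra.
  by move=> t x /=; rewrite in_itv /=; exact: retract_homotopy_Delta.
- exists snd; split => //.
    by apply: continuous_within_of_cvg => -[t y] _; exact: cvg_snd.
  by move=> y y1; rewrite /= to_sphereK.
Qed.

End MatchedDigraph.

Lemma involution_transversal (T : finType) (f : T -> T) (n : nat) :
  involutive f -> (forall x, f x != x) -> #|T| = (2 * n)%N ->
  exists s : 'I_n -> T, [/\ injective s,
    forall x, exists i, x = s i \/ x = f (s i) & forall i j, s i != f (s j)].
Proof.
move=> fK fx cardT.
pose S := [set x | (enum_rank x < enum_rank (f x))%N]%SET.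
have notS x : (x \notin S) = (f x \in S).
  rewrite !inE fK -leqNgt leq_eqVlt orb_idl // => /eqP/ord_inj/enum_rank_inj/eqP.
  by rewrite (negbTE (fx x)).
have cardS : #|S| = n.
  have CS : #|~: S| = #|S|.
    rewrite -(card_preimset S (can_inj fK)); apply: eq_card => x.
    by rewrite finset.in_setC notS [in RHS]finset.in_set.
  apply/eqP; rewrite -(eqn_pmul2l (isT : (0 < 2)%N)) mul2n -addnn -{2}CS cardsC.
  by rewrite cardT.
pose s (i : 'I_n) := enum_val (cast_ord (esym cardS) i).
have sS i : s i \in S by exact: enum_valP.
exists s; split.
- by move=> i j /enum_val_inj/cast_ord_inj.
- move=> x; have [xS|] := boolP (x \in S).
    by exists (cast_ord cardS (enum_rank_in xS x)); left; rewrite /s cast_ordK enum_rankK_in.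
  rewrite notS => fxS; exists (cast_ord cardS (enum_rank_in fxS (f x))); right.
  by rewrite /s cast_ordK enum_rankK_in // fK.
- move=> i j; apply: contraTneq (sS i) => ->.
  by rewrite notS fK.
Qed.

Lemma pick_card1 (T : finType) (P : pred T) (x0 : T) :
  #|[set y | P y]%SET| = 1%N ->
  P (odflt x0 [pick y | P y]) /\ forall z, P z -> z = odflt x0 [pick y | P y].
Proof.
move=> /eqP/cards1P[y Py].
have Pz z : P z = (z == y) by rewrite -finset.in_set1 -Py finset.in_set.
case: pickP => [y' Py'|P0] /=; last by have := P0 y; rewrite Pz eqxx.
by move: Py'; rewrite Pz => /eqP ->; split=> // z; rewrite Pz => /eqP.
Qed.

Section BasicTreePartner.
Variables (V : finType) (e : rel V).
Hypothesis e_sym : symmetric e.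
Hypothesis leaf_attached :
  forall x, ~~ is_leaf e x -> #|[set y | e x y & is_leaf e y]%SET| = 1%N.

Definition leaf_neighbour (x : V) : V := odflt x [pick y | e x y].
Definition attached_leaf (x : V) : V := odflt x [pick y | e x y && is_leaf e y].
Definition tree_partner (x : V) : V :=
  if is_leaf e x then leaf_neighbour x else attached_leaf x.

Lemma leaf_neighbourP x : is_leaf e x ->
  e x (leaf_neighbour x) /\ forall z, e x z -> z = leaf_neighbour x.
Proof. by move/eqP; exact: pick_card1. Qed.

Lemma attached_leafP x : ~~ is_leaf e x ->
  [/\ e x (attached_leaf x), is_leaf e (attached_leaf x)
    & forall z, e x z -> is_leaf e z -> z = attached_leaf x].
Proof.
move/leaf_attached/(@pick_card1 _ (fun y => e x y && is_leaf e y) x) => -[/andP[ex lx] only].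
by split=> // z ez lz; apply: only; rewrite ez.
Qed.

Lemma tree_partner_adj x : e x (tree_partner x).
Proof. by rewrite /tree_partner; case: ifPn => [/leaf_neighbourP[]|/attached_leafP[]]. Qed.

Lemma tree_partnerK : involutive tree_partner.
Proof.
move=> x; have := tree_partner_adj x; rewrite e_sym.
set y := tree_partner x => eyx; rewrite {1}/tree_partner; case: ifPn => ly.
  by have [_ only] := leaf_neighbourP ly; rewrite -(only x eyx).
have [_ _ only] := attached_leafP ly; apply/esym/only => //.
move: ly; rewrite /y /tree_partner; case: ifPn => // lx.
by have [_ -> _] := attached_leafP lx.
Qed.

Lemma tree_partner_pendant u w z :
  e u w -> u != tree_partner w -> e z (tree_partner w) -> z = w.
Proof.
rewrite /tree_partner; case: ifPn => lw euw.
  by have [_ only] := leaf_neighbourP lw; rewrite -(only u) ?eqxx // e_sym.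
have [ew la _] := attached_leafP lw; have [_ only] := leaf_neighbourP la.
move=> _ ezl; rewrite (only z); last by rewrite e_sym.
by apply/esym/only; rewrite e_sym.
Qed.

End BasicTreePartner.

Lemma card2_tree_leaf (V : finType) (e : rel V) :
  irreflexive e -> graph_connected e -> #|V| = 2%N -> forall x, is_leaf e x.
Proof.
move=> e_irr e_conn cardV x.
have /cards1P[y Cx] : #|[set~ x]%SET| == 1%N by rewrite cardsC1 cardV.
have other z : z != x -> z = y by move=> zx; apply/set1P; rewrite -Cx !inE.
have yx : y != x by have := set11 y; rewrite -Cx !inE.
have ex_neq z : e x z -> z != x by apply: contraTneq => ->; rewrite e_irr.
rewrite /is_leaf /degree (_ : [set z | e x z] = [set y])%SET ?cards1 //.
apply/setP => z; rewrite !inE; apply/idP/eqP => [/ex_neq/other //|->].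
have /connectP[[/= _ xy|z' q /= /andP[exz _] _]] := e_conn x y.
  by rewrite xy eqxx in yx.
by rewrite -(other z' (ex_neq _ exz)).
Qed.

Theorem mainTheorem10 (R : realType) (V : finType) (e : rel V) (n : nat) :
  (1 <= n)%N -> #|V| = (2 * n)%N -> basic_tree e ->
  homotopy_equivalent R (Delta_realization R (double_orient e)) (sphere_in R n).
Proof.
move=> _ cardV [[[e_sym e_irr] [e_conn _]] basic].
have attached x : ~~ is_leaf e x -> #|[set y | e x y & is_leaf e y]%SET| = 1%N.
  case: basic => [card2|[m [_ _ _ attached]]]; last exact: attached.
  by rewrite card2_tree_leaf.
have De : double_orient e =2 e by move=> a b; rewrite /double_orient (e_sym b) orbb.
have partner_neq x : tree_partner e x != x.
  by apply: contraTneq (tree_partner_adj attached x) => ->; rewrite e_irr.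
have [s [s_inj s_cover s_partner]] :=
  involution_transversal (tree_partnerK e_sym attached) partner_neq cardV.
have D_sym : symmetric (double_orient e) by move=> a b; rewrite !De e_sym.
have D_partner x : double_orient e x (tree_partner e x).
  by rewrite De; exact: tree_partner_adj.
have pendant u w z : double_orient e u w -> u != tree_partner e w ->
    double_orient e z (tree_partner e w) -> z = w.
  by rewrite !De; exact: tree_partner_pendant.
exact: (Delta_homotopy_equivalent_sphere D_sym D_partner (tree_partnerK e_sym attached)
  pendant R s_inj s_cover s_partner).
Qed.
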